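(* Let $m\ge 2$ and let $\langle a,b\mid (ab)^m=(ba)^m\rangle$ be the dihedral Artin group with label $2m$, and let $z_{ab}=(ab)^m$. If $x\in\langle a,z_{ab}\rangle$ is a primitive element of $\langle a,z_{ab}\rangle\cong\mathbb{Z}^2$ admitting an $n$-th root $w\in\langle a,b\rangle$ (i.e. $w^n=x$), then $n\le m$.
   Context: $z_{ab}=(ab)^m$ generates the centre of this dihedral Artin group, and $\langle a,z_{ab}\rangle$ is free abelian of rank 2. An element of a free abelian group is primitive if it is not a proper power of another element of that group. *)

(* The dihedral Artin group A_m = < a, b | (ab)^m = (ba)^m >
   is encoded as words in the free monoid on a, b, a^-1, b^-1 modulo the
   congruence generated by free cancellation and the defining relation. *)
From mathcomp Require Import all_boot all_algebra.
Set Implicit Arguments. Unset Strict Implicit. Unset Printing Implicit Defensive.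

(* a letter: (generator, inverted?) ; generator false = a, true = b *)
Definition letter := (bool * bool)%type.
Definition word := seq letter.

Definition linv (l : letter) : letter := (l.1, ~~ l.2).
Definition winv (w : word) : word := rev (map linv w).

Definition ga : word := [:: (false, false)].
Definition gb : word := [:: (true, false)].

Fixpoint wpow (w : word) (n : nat) : word :=
  if n is n'.+1 then w ++ wpow w n' else [::].

Definition wzpow (w : word) (z : int) : word :=
  match z with
  | Posz n => wpow w n
  | Negz n => wpow (winv w) n.+1
  end.

Inductive aeq (m : nat) : word -> word -> Prop :=
| aeq_refl u : aeq m u u
| aeq_sym u v : aeq m u v -> aeq m v u
| aeq_trans u v w : aeq m u v -> aeq m v w -> aeq m u w
| aeq_cancel u v l : aeq m (u ++ [:: l; linv l] ++ v) (u ++ v)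
| aeq_rel u v : aeq m (u ++ wpow (ga ++ gb) m ++ v) (u ++ wpow (gb ++ ga) m ++ v).

Definition zab (m : nat) : word := wpow (ga ++ gb) m.

Definition in_az (m : nat) (x : word) : Prop :=
  exists i j : int, aeq m x (wzpow ga i ++ wzpow (zab m) j).

Definition primitive_az (m : nat) (x : word) : Prop :=
  in_az m x /\ ~ (exists (y : word) (k : nat), 2 <= k /\ in_az m y /\ aeq m (wpow y k) x).

(* Writing x = a^i z^j, primitivity makes i and j coprime.  The exponent sums
   of a and of b are homomorphisms from the Artin group to Z; applied to
   w^n = a^i z^j they give n e_a(w) = i + jm and n e_b(w) = jm.  Hence n
   divides i and jm, so n is coprime to j and divides m. *)

From mathcomp Require Import all_boot all_algebra.
From mathcomp Require Import zify.

Set Implicit Arguments. Unset Strict Implicit. Unset Printing Implicit Defensive.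
Import GRing.Theory.
Local Open Scope ring_scope.

Section ExponentSum.

Variable g : bool.

Definition letter_exp (l : letter) : int := if l.1 == g then (-1) ^+ l.2 else 0.

Definition exp_sum (w : word) : int := \sum_(l <- w) letter_exp l.

Lemma exp_sum_cat u v : exp_sum (u ++ v) = exp_sum u + exp_sum v.
Proof. exact: big_cat. Qed.

Lemma letter_exp_linv l : letter_exp (linv l) = - letter_exp l.
Proof. by case: l => g' []; rewrite /letter_exp /=; case: (g' == g). Qed.

Lemma exp_sum_winv w : exp_sum (winv w) = - exp_sum w.
Proof.
rewrite /exp_sum /winv big_rev big_map -sumrN.
by apply: eq_bigr => l _; rewrite letter_exp_linv.
Qed.

Lemma exp_sum_wpow w n : exp_sum (wpow w n) = n%:Z * exp_sum w.
Proof.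
elim: n => [|n IHn] /=; first by rewrite mul0r /exp_sum big_nil.
by rewrite exp_sum_cat IHn -addn1 PoszD mulrDl mul1r addrC.
Qed.

Lemma exp_sum_wzpow w i : exp_sum (wzpow w i) = i * exp_sum w.
Proof. by case: i => n; rewrite /wzpow exp_sum_wpow // exp_sum_winv NegzE mulrN mulNr. Qed.

Lemma exp_sum_aeq m u v : aeq m u v -> exp_sum u = exp_sum v.
Proof.
elim=> // [u' v' w' _ -> _ -> // | u' v' l | u' v'].
  by rewrite !exp_sum_cat /exp_sum !big_cons big_nil letter_exp_linv addr0 addrN add0r.
by rewrite !exp_sum_cat !exp_sum_wpow !exp_sum_cat [exp_sum ga + _]addrC.
Qed.

End ExponentSum.

Lemma exp_sum_ga g : exp_sum g ga = (~~ g)%:R.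
Proof. by case: g; rewrite /exp_sum big_seq1. Qed.

Lemma exp_sum_zab g m : exp_sum g (zab m) = m%:Z.
Proof. by rewrite exp_sum_wpow /exp_sum big_cons big_seq1; case: g; rewrite mulr1. Qed.

Section Congruence.

Variable m : nat.

Lemma aeq_catl p u v : aeq m u v -> aeq m (p ++ u) (p ++ v).
Proof.
elim=> {u v} [u | u v _ | u v w _ uv _ vw | u v l | u v].
- exact: aeq_refl.
- exact: aeq_sym.
- exact: aeq_trans uv vw.
- by have := aeq_cancel m (p ++ u) v l; rewrite -!catA.
- by have := aeq_rel m (p ++ u) v; rewrite -!catA.
Qed.

Lemma aeq_catr s u v : aeq m u v -> aeq m (u ++ s) (v ++ s).
Proof.
elim=> {u v} [u | u v _ | u v w _ uv _ vw | u v l | u v].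
- exact: aeq_refl.
- exact: aeq_sym.
- exact: aeq_trans uv vw.
- by have := aeq_cancel m u (v ++ s) l; rewrite -!catA.
- by have := aeq_rel m u (v ++ s); rewrite -!catA.
Qed.

Lemma winvK : involutive winv.
Proof.
move=> w; rewrite /winv map_rev revK -map_comp map_id_in // => -[? ?] _.
by rewrite /= /linv negbK.
Qed.

Lemma aeq_catV u : aeq m (u ++ winv u) [::].
Proof.
elim: u => [|l u IHu]; first exact: aeq_refl.
rewrite /winv rev_cons -cats1 -/(winv u).
have -> : (l :: u) ++ winv u ++ [:: linv l] = [:: l] ++ (u ++ winv u) ++ [:: linv l].
  by rewrite /= catA.
apply: aeq_trans (aeq_catl _ (aeq_catr _ IHu)) _.
exact: (aeq_cancel m [::] [::] l).
Qed.

Lemma aeq_Vcat u : aeq m (winv u ++ u) [::].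
Proof. by have := aeq_catV (winv u); rewrite winvK. Qed.

Definition wcommute (u v : word) : Prop := aeq m (u ++ v) (v ++ u).

Lemma wcommute_sym u v : wcommute u v -> wcommute v u.
Proof. exact: aeq_sym. Qed.

Lemma wcommuteVl u v : wcommute u v -> wcommute (winv u) v.
Proof.
move=> uv; rewrite /wcommute.
have e1 := aeq_catl (winv u ++ v) (aeq_catV u).
have e2 := aeq_catr (winv u) (aeq_catl (winv u) (aeq_sym uv)).
have e3 := aeq_catr (v ++ winv u) (aeq_Vcat u).
rewrite cats0 -!catA in e1; rewrite -!catA in e2 e3.
exact: aeq_trans (aeq_sym e1) (aeq_trans e2 e3).
Qed.

Lemma wcommute_wpowl u v n : wcommute u v -> wcommute (wpow u n) v.
Proof.
move=> uv; elim: n => [|n IHn] /=; first by rewrite /wcommute cats0; exact: aeq_refl.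
rewrite /wcommute -catA; apply: aeq_trans (aeq_catl _ IHn) _.
by rewrite !catA; apply: aeq_catr.
Qed.

Lemma wcommute_wzpowl u v i : wcommute u v -> wcommute (wzpow u i) v.
Proof. by case: i => n uv; apply: wcommute_wpowl => //; apply: wcommuteVl. Qed.

Lemma wcommute_wzpow u v i j : wcommute u v -> wcommute (wzpow u i) (wzpow v j).
Proof. by move=> uv; apply/wcommute_sym/wcommute_wzpowl/wcommute_sym/wcommute_wzpowl. Qed.

Lemma wpow_cat_wcommute u v k :
  wcommute u v -> aeq m (wpow (u ++ v) k) (wpow u k ++ wpow v k).
Proof.
move=> uv; elim: k => [|k IHk] /=; first exact: aeq_refl.
rewrite -catA; apply: aeq_trans (aeq_catl _ (aeq_catl _ IHk)) _.
rewrite -!catA; apply: aeq_catl; rewrite !catA; apply: aeq_catr.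
exact/wcommute_sym/wcommute_wpowl.
Qed.

Lemma wcommute_ga_zab : wcommute ga (zab m).
Proof.
have wpow_shift x y n : wpow (x ++ y) n ++ x = x ++ wpow (y ++ x) n.
  by elim: n => [|n IHn] /=; rewrite ?cats0 // -!catA IHn.
by rewrite /wcommute /zab wpow_shift; have := aeq_rel m ga [::]; rewrite !cats0.
Qed.

End Congruence.

Lemma wpowD w k l : wpow w (k + l)%N = wpow w k ++ wpow w l.
Proof. by elim: k => [|k IHk] //=; rewrite IHk catA. Qed.

Lemma wpowM w k l : wpow (wpow w k) l = wpow w (k * l)%N.
Proof. by elim: l => [|l IHl] /=; rewrite ?muln0 // IHl mulnS wpowD. Qed.

Lemma wpow_wzpow w i k : wpow (wzpow w i) k = wzpow w (k%:Z * i).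
Proof.
case: i => n; first by rewrite -PoszM mulnC /= wpowM.
case: k => [|k]; first by rewrite mul0r.
have -> : k.+1%:Z * Negz n = Negz (k * n.+1 + n) by rewrite !NegzE; lia.
by rewrite /wzpow wpowM; congr wpow; lia.
Qed.

Lemma primitive_az_coprime m x : primitive_az m x ->
  exists i j : int, aeq m x (wzpow ga i ++ wzpow (zab m) j) /\ coprimez i j.
Proof.
case=> -[i [j x_ij]] not_power; exists i, j; split => //.
apply: contraT => not_coprime; case: not_power.
have [/eqP|d_ne0] := eqVneq (gcdz i j) 0.
  rewrite gcdz_eq0 => /andP[/eqP i0 /eqP j0]; subst i j.
  by exists [::], 2; split=> //; split; [exists 0, 0; exact: aeq_refl | exact: aeq_sym].
case Ed : (gcdz i j) d_ne0 not_coprime => [d|//] d_ne0 not_coprime.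
exists (wzpow ga (i %/ d)%Z ++ wzpow (zab m) (j %/ d)%Z), d.
split; first by rewrite /coprimez Ed in not_coprime; lia.
split; first by exists (i %/ d)%Z, (j %/ d)%Z; exact: aeq_refl.
apply: aeq_trans (wpow_cat_wcommute _ (wcommute_wzpow _ _ (wcommute_ga_zab m))) _.
rewrite !wpow_wzpow -Ed ![gcdz i j * _]mulrC !divzK ?dvdz_gcdl ?dvdz_gcdr //.
exact: aeq_sym.
Qed.

Lemma Gauss_dvdz_coprime (n m : nat) (i j : int) :
  coprimez i j -> (n%:Z %| i)%Z -> (n%:Z %| j * m%:Z)%Z -> (n %| m)%N.
Proof.
move=> co_ij n_i; have co_nj : coprimez n j := coprimez_dvdl n_i co_ij.
by rewrite Gauss_dvdzr.
Qed.

Local Close Scope ring_scope.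

Theorem lemma5p1 (m : nat) (x w : word) (n : nat) :
  2 <= m -> primitive_az m x -> aeq m (wpow w n) x -> n <= m.
Proof.
move=> m_ge2 x_prim wn_x.
have [i [j [x_ij co_ij]]] := primitive_az_coprime x_prim.
have wn_ij := aeq_trans wn_x x_ij.
have := exp_sum_aeq false wn_ij; have := exp_sum_aeq true wn_ij.
rewrite !exp_sum_wpow !exp_sum_cat !exp_sum_wzpow !exp_sum_ga !exp_sum_zab.
rewrite mulr0 mulr1 add0r => e_b e_a.
have n_i : (n%:Z %| i)%Z.
  apply/dvdzP; exists (exp_sum false w - exp_sum true w)%R.
  by rewrite mulrC mulrBr e_a e_b addrK.
have n_jm : (n%:Z %| (j * m%:Z)%R)%Z by rewrite -e_b dvdz_mulr.
exact: dvdn_leq (ltnW m_ge2) (Gauss_dvdz_coprime co_ij n_i n_jm).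
Qed.
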